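(* Assume $v_\circ<v_\bullet$ and fix $v<v_\bullet$. For every $k'\in\mathbb N$ there exist $k_2\ge k'$ and $\rho_0\ge1$ (large enough) such that $p_{k_2}<e^{-\log^{3/2}L_{k_2}}$.
   Context: Fix $q\in(0,1)$, $p_\circ,p_\bullet\in[0,1]$, $v_\circ=2p_\circ-1$, $v_\bullet=2p_\bullet-1$. Under $\mathbb P^\rho$: $\omega$ is a Poisson point process of intensity $\rho\sum_xP_x$ on two-sided paths $w:\mathbb Z\to\mathbb Z$, where $P_x$ is the law of a two-sided lazy simple random walk (steps $-1,0,1$ with probabilities $\frac{1-q}2,q,\frac{1-q}2$) with $w(0)=x$; independently $(U_y)_{y\in\mathbb Z^2}$ are i.i.d. uniform $[0,1]$. $\mathcal T=\{(w(n),n): w\in\omega, n\in\mathbb Z\}$. For $y\in\mathbb Z^2$, $Y^y_0=y$ and $Y^y_{i+1}=Y^y_i+(1,1)$ if ($Y^y_i\in\mathcal T$, $U_{Y^y_i}\le p_\bullet$) or ($Y^y_i\notin\mathcal T$, $U_{Y^y_i}\le p_\circ$), else $Y^y_{i+1}=Y^y_i+(-1,1)$; $X^y$ is the spatial coordinate of $Y^y$. Scales: $L_0=100$, $L_{k+1}=\lfloor L_k^{1/2}\rfloor L_k$. $I_L=([0,L]\times\{0\})\cap\mathbb Z^2$, $I_L(m)=(rL,sL)+I_L$ for $m=(r,s)$. Velocities: $\delta=\frac12(v_\bullet-v)$, $v_1=v_\bullet-\delta$, $v_{k+1}=v_k-\delta\frac{6}{\pi^2}\frac1{k^2}$. Bad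 events: $A_k(m)=\{\exists (x,n)\in I_{L_k}(m): X^{(x,n)}_{L_k}-x<v_kL_k\}$. Densities: $\rho_0>0$ given, $\rho_{k+1}=(1+L_k^{-1/16})\rho_k$. $p_k=\mathbb P^{\rho_k}(A_k(0))$. *)

From HB Require Import structures.
From mathcomp Require Import all_boot all_order all_algebra.
From mathcomp Require Import all_classical all_reals all_analysis.
From Stdlib Require Import PeanoNat.
Set Implicit Arguments. Unset Strict Implicit. Unset Printing Implicit Defensive.
Import Order.TTheory GRing.Theory Num.Theory.
Local Open Scope classical_set_scope.
Local Open Scope ring_scope.

Fixpoint Lscale (k : nat) : nat :=
  match k with
  | 0 => 100
  | k'.+1 => (Nat.sqrt (Lscale k') * Lscale k')%N
  end.

Section Params.
Variable R : realType.

Definition delta (vb v : R) : R := (vb - v) / 2.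

(* v_1 = v_bullet - delta, v_{k+1} = v_k - delta * 6/pi^2 * 1/k^2  (k >= 1).
   v_0 is not defined in the paper; we set v_0 := v_bullet (never used since
   the statement requires k2 >= 1). *)
Fixpoint vel (vb v : R) (k : nat) : R :=
  match k with
  | 0 => vb
  | 1 => vb - delta vb v
  | (k'.+1 as k1).+1 => vel vb v k1 - delta vb v * (6 / pi ^+ 2) / (k1%:R ^+ 2)
  end.

Fixpoint rho_seq (rho0 : R) (k : nat) : R :=
  match k with
  | 0 => rho0
  | k'.+1 => (1 + powR (Lscale k')%:R (- (1/16))) * rho_seq rho0 k'
  end.

(* Position at time n of a two-sided path with w(0) = x and increments
   w(m+1) - w(m) = xi m. *)
Definition walkpos (xi : int -> int) (x : int) (n : int) : int :=
  match n with
  | Posz k => x + \sum_(i < k) xi (Posz i)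
  | Negz k => x - \sum_(i < k.+1) xi (Negz i)
  end.

Section Model.
Context {d : measure_display} {Omega : measurableType d}.

(* Random objects:
   N x        = number of Poisson paths w with w(0) = x,
   xi x j m   = increment at time m (w(m+1)-w(m)) of the j-th such path,
   U y        = the uniform variable attached to y in Z^2. *)
Variables (N : int -> Omega -> nat) (xi : int -> nat -> int -> Omega -> int)
          (U : int * int -> Omega -> R).

(* Index set of the elementary random variables. *)
Definition src : Type := ((int + (int * nat * int)) + (int * int))%type.

(* Generating pi-systems of events for each elementary random variable. *)
Definition gen_events (i : src) : set (set Omega) :=
  match i with
  | inl (inl x) => [set E | exists n : nat, E = [set w | N x w = n]]
  | inl (inr (x, j, m)) => [set E | exists s : int, E = [set w | xi x j m w = s]]
  | inr y => [set E | exists t : R, E = [set w | U y w <= t]]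
  end.

Definition inT (w : Omega) (y : int * int) : Prop :=
  exists (x : int) (j : nat), (j < N x w)%N /\ walkpos (fun m => xi x j m w) x y.2 = y.1.

Definition stepRight (pc pb : R) (w : Omega) (z : int * int) : bool :=
  (`[< inT w z >] && (U z w <= pb)) || (~~ `[< inT w z >] && (U z w <= pc)).

Fixpoint Ywalk (pc pb : R) (w : Omega) (y : int * int) (i : nat) : int * int :=
  match i with
  | 0 => y
  | i'.+1 => let z := Ywalk pc pb w y i' in
             if stepRight pc pb w z then (z.1 + 1, z.2 + 1)%R else (z.1 - 1, z.2 + 1)%R
  end.

Definition Abad (pc pb vb v : R) (k : nat) : set Omega :=
  [set w | exists x : nat, (x <= Lscale k)%N /\
     ((Ywalk pc pb w (x%:Z, 0%:Z) (Lscale k)).1 - x%:Z)%:~R < vel vb v k * (Lscale k)%:R].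

(* (Omega, P, N, xi, U) realizes the law P^rho: the Poisson point process of
   intensity rho * sum_x P_x on two-sided lazy random walk paths (given as the
   superposition over x of Poisson(rho) many independent paths started at x),
   together with independent i.i.d. uniform [0,1] variables U. *)
Definition PPP_model (P : probability Omega R) (q rho : R) : Prop :=
  [/\ (forall i E, gen_events i E -> measurable E),
      (forall (x : int) (n : nat),
          P [set w | N x w = n] = (expR (- rho) * rho ^+ n / (n`!)%:R)%:E),
      (forall x j m, [/\ P [set w | xi x j m w = 1] = ((1 - q) / 2)%:E,
                         P [set w | xi x j m w = 0] = q%:E &
                         P [set w | xi x j m w = -1] = ((1 - q) / 2)%:E]),
      (forall y (t : R), 0 <= t <= 1 -> P [set w | U y w <= t] = t%:E) &
      (forall (J : seq src) (E : src -> set Omega), uniq J ->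
          (forall i, i \in J -> gen_events i (E i)) ->
          P (\bigcap_(i in [set` J]) E i) = (\prod_(i <- J) P (E i))%E)].

End Model.
End Params.

(* Take the initial density so large, relative to L = L_k2, that with high
   probability every site (a, 0) with -L <= a <= 2L emits at least M Poisson
   paths, one of which is lazy for its first L steps (q > 0).  Then the whole
   box [-L, 2L] x [0, L] lies in the trace T, so a walk started in I_L only ever
   sees occupied sites and is a simple random walk with right-step probability
   p_bullet, hence drift v_bullet >= v_k + delta.  A Chernoff bound with a fixed
   exponent makes a displacement below v_k L cost (L + 1) e^(-eta L), which is
   below e^(-log^(3/2) L) / 4 once k2 is large. *)

From HB Require Import structures.
From mathcomp Require Import all_boot all_order all_algebra.
From mathcomp Require Import all_classical all_reals all_analysis.
From mathcomp Require Import ring lra zify.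
From Stdlib Require Import PeanoNat.
Set Implicit Arguments. Unset Strict Implicit. Unset Printing Implicit Defensive.
Import Order.TTheory GRing.Theory Num.Theory.
Local Open Scope classical_set_scope.
Local Open Scope ring_scope.

Section Probability.
Variable R : realType.
Context {d : measure_display} {Omega : measurableType d}.
Variable P : probability Omega R.

Definition pr (A : set Omega) : R := fine (P A).

Lemma prE A : measurable A -> P A = (pr A)%:E.
Proof.
move=> mA; rewrite /pr fineK// ge0_fin_numE ?measure_ge0//.
by rewrite (le_lt_trans (probability_le1 P mA)) ?ltry.
Qed.

Lemma pr_setT : pr setT = 1.
Proof. by rewrite /pr probability_setT. Qed.

Lemma le_pr A B : measurable A -> measurable B -> A `<=` B -> pr A <= pr B.
Proof.
move=> mA mB AB; have := le_measure P (mem_set mA) (mem_set mB) AB.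
by rewrite /= (prE mA) (prE mB) lee_fin.
Qed.

Lemma pr_setU_le A B : measurable A -> measurable B -> pr (A `|` B) <= pr A + pr B.
Proof.
move=> mA mB; have := measureU2 P mA mB.
by rewrite /= (prE mA) (prE mB) prE ?lee_fin//; exact: measurableU.
Qed.

Lemma pr_setD A B : measurable A -> measurable B -> B `<=` A ->
  pr (A `\` B) = pr A - pr B.
Proof.
move=> mA mB BA; have := @measureD _ _ _ P _ _ mA mB.
rewrite /= (setIidr BA) (prE mA) (prE mB) prE; last exact: measurableD.
by move=> /(_ (ltry _)) [].
Qed.

Lemma pr_bigsetU_le I (r : seq I) (p : pred I) (F : I -> set Omega) :
  (forall i, p i -> measurable (F i)) ->
  pr (\big[setU/set0]_(i <- r | p i) F i) <= \sum_(i <- r | p i) pr (F i).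
Proof.
move=> mF; elim: r => [|i r IH]; first by rewrite !big_nil /pr measure0.
rewrite !big_cons; case: ifP => pi //.
apply: le_trans (pr_setU_le _ _) _; first exact: mF.
  exact: bigsetU_measurable.
by rewrite lerD2l.
Qed.

End Probability.

Section Independence.
Variable R : realType.
Context {d : measure_display} {Omega : measurableType d}.
Variable P : probability Omega R.
Variables (N : int -> Omega -> nat) (xi : int -> nat -> int -> Omega -> int)
          (U : int * int -> Omega -> R).
Variables (q rho : R).
Hypothesis HM : PPP_model N xi U P q rho.
Variable E : src -> set Omega.
Hypothesis HE : forall i, gen_events N xi U i (E i).

Definition cyl (J : seq src) := \big[setI/setT]_(i <- J) E i.

Lemma measurable_cyl J : measurable (cyl J).
Proof.
case: HM => mE _ _ _ _.
by apply: bigsetI_measurable => i _; exact: mE (HE i).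
Qed.

Lemma pr_cyl J : uniq J -> pr P (cyl J) = \prod_(i <- J) pr P (E i).
Proof.
case: HM => mE _ _ _ indep uJ.
have := indep J E uJ (fun i _ => HE i).
rewrite bigcap_seq -/(cyl J) (prE P (measurable_cyl J)).
rewrite (eq_bigr (fun i => (pr P (E i))%:E)) ?prodEFin; first by case.
by move=> i _; rewrite -prE //; exact: mE (HE i).
Qed.

Lemma pr_cyl_blocks (Bs : seq (seq src * bool)) (Y : seq src) :
  uniq (Y ++ flatten (map fst Bs)) ->
  pr P (cyl Y `&` \big[setI/setT]_(b <- Bs) (if b.2 then cyl b.1 else ~` cyl b.1))
  = pr P (cyl Y) * \prod_(b <- Bs) (if b.2 then pr P (cyl b.1) else 1 - pr P (cyl b.1)).
Proof.
elim: Bs Y => [|[B s] Bs IH] Y; first by rewrite !big_nil setIT mulr1.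
rewrite /= catA => uY.
have uYBs : uniq (Y ++ flatten (map fst Bs)).
  apply: subseq_uniq uY; rewrite -catA.
  exact: cat_subseq (subseq_refl Y) (suffix_subseq _ _).
have [uY0 uB0] : uniq Y /\ uniq B.
  by move: uY; rewrite !cat_uniq => /andP[/and3P[-> _ ->]].
have pYB : pr P (cyl (Y ++ B)) = pr P (cyl Y) * pr P (cyl B).
  by rewrite !pr_cyl // ?big_cat //; move: uY; rewrite cat_uniq => /andP[].
rewrite !big_cons /=.
set rest := \big[setI/setT]_(b <- Bs) _.
have mrest : measurable rest.
  apply: bigsetI_measurable => -[b []] _ /=; first exact: measurable_cyl.
  exact/measurableC/measurable_cyl.
have cyl_cat : cyl (Y ++ B) = cyl Y `&` cyl B by rewrite /cyl big_cat.
case: s.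
  by rewrite setIA -cyl_cat IH // pYB mulrA.
have -> : cyl Y `&` (~` cyl B `&` rest) = (cyl Y `&` rest) `\` (cyl (Y ++ B) `&` rest).
  rewrite cyl_cat; apply/seteqP; split => w /=.
    by move=> [Yw [nB Rw]]; split => // -[[_ ?] _].
  by move=> [[Yw Rw] H]; split => //; split => // Bw; apply: H.
rewrite pr_setD; first last.
- by rewrite cyl_cat => w [[? ?] ?].
- exact/measurableI/mrest/measurable_cyl.
- exact/measurableI/mrest/measurable_cyl.
by rewrite IH // IH // pYB; ring.
Qed.

End Independence.

Section Measurability.
Variable R : realType.
Context {d : measure_display} {Omega : measurableType d}.
Variables (N : int -> Omega -> nat) (xi : int -> nat -> int -> Omega -> int)
          (U : int * int -> Omega -> R).
Hypothesis Hm : forall i E, gen_events N xi U i E -> measurable E.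

Lemma measurable_set_cst (p : Prop) : measurable [set _ : Omega | p].
Proof.
have [H|H] := pselect p.
  by rewrite (_ : [set _ | p] = setT) //; apply/seteqP; split.
by rewrite (_ : [set _ | p] = set0) //; apply/seteqP; split.
Qed.

Lemma measurable_N_eq x n : measurable [set w | N x w = n].
Proof. by apply: (Hm (i := inl (inl x))); exists n. Qed.

Lemma measurable_xi_eq x j m s : measurable [set w | xi x j m w = s].
Proof. by apply: (Hm (i := inl (inr (x, j, m)))); exists s. Qed.

Lemma measurable_U_le y t : measurable [set w | U y w <= t].
Proof. by apply: (Hm (i := inr y)); exists t. Qed.

Lemma measurable_sum_eq (f : nat -> Omega -> int) :
  (forall i s, measurable [set w | f i w = s]) ->
  forall k c, measurable [set w | \sum_(i < k) f i w = c].
Proof.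
move=> mf; elim => [|k IH] c.
  by under eq_set do rewrite big_ord0; exact: measurable_set_cst.
have -> : [set w | \sum_(i < k.+1) f i w = c] =
    \bigcup_(s : int) ([set w | \sum_(i < k) f i w = c - s] `&` [set w | f k w = s]).
  apply/seteqP; split => w /=.
    by rewrite big_ord_recr /= => <-; exists (f k w) => //; split => //; rewrite addrK.
  by move=> [s _ [H1 H2]]; rewrite big_ord_recr /= H1 H2 subrK.
apply: countable_bigcupT_measurable; first exact: countableP.
by move=> s; apply: measurableI; [exact: IH | exact: mf].
Qed.

Lemma measurable_walkpos_eq x j a n c :
  measurable [set w | walkpos (fun m => xi x j m w) a n = c].
Proof.
case: n => k /=.
  rewrite (_ : [set w | _] = [set w | \sum_(i < k) xi x j (Posz i) w = c - a]).
    by apply: (measurable_sum_eq (f := fun i => xi x j (Posz i))) => i;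
      exact: measurable_xi_eq.
  by apply/seteqP; split => w /= H; lia.
rewrite (_ : [set w | _] = [set w | \sum_(i < k.+1) xi x j (Negz i) w = a - c]).
  by apply: (measurable_sum_eq (f := fun i => xi x j (Negz i))) => i;
    exact: measurable_xi_eq.
by apply/seteqP; split => w /= H; lia.
Qed.

Lemma measurable_N_gt x j : measurable [set w | (j < N x w)%N].
Proof.
have -> : [set w | (j < N x w)%N] = ~` \bigcup_(n in `I_j.+1) [set w | N x w = n].
  apply/seteqP; split => w /=.
    by move=> jN [n /= nj Nn]; move: nj jN; rewrite -Nn ltnS => /leq_gtF ->.
  case: ltnP => // Nj H; exfalso; apply: H.
  by exists (N x w) => //=; rewrite ltnS.
by apply/measurableC/bigcup_measurable => n _; exact: measurable_N_eq.
Qed.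

Lemma measurable_inT y : measurable [set w | inT N xi w y].
Proof.
have -> : [set w | inT N xi w y] = \bigcup_(p : int * nat)
    ([set w | (p.2 < N p.1 w)%N] `&`
     [set w | walkpos (fun m => xi p.1 p.2 m w) p.1 y.2 = y.1]).
  apply/seteqP; split => w /=; first by move=> [x [j [H1 H2]]]; exists (x, j).
  by move=> [[x j] _ /= [H1 H2]]; exists x, j.
apply: countable_bigcupT_measurable; first exact: countableP.
by move=> p; apply: measurableI; [exact: measurable_N_gt | exact: measurable_walkpos_eq].
Qed.

Lemma measurable_stepRight pc pb z : measurable [set w | stepRight N xi U pc pb w z].
Proof.
have -> : [set w | stepRight N xi U pc pb w z] =
    ([set w | inT N xi w z] `&` [set w | U z w <= pb]) `|`
    (~` [set w | inT N xi w z] `&` [set w | U z w <= pc]).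
  apply/seteqP; split => w /=; rewrite /stepRight;
    case: (asboolP (inT N xi w z)) => H /=; rewrite ?andbF ?orbF ?andbT.
  - by left.
  - by right.
  - by case=> [[]|[]].
  - by case=> [[]|[]].
apply: measurableU; apply: measurableI; try exact: measurable_U_le.
  exact: measurable_inT.
exact/measurableC/measurable_inT.
Qed.

Lemma measurable_if_eq (T : Type) (b : Omega -> bool) (u v t : T) :
  measurable [set w | b w] -> measurable [set w | (if b w then u else v) = t].
Proof.
move=> mb; have -> : [set w | (if b w then u else v) = t] =
    ([set w | b w] `&` [set _ | u = t]) `|` (~` [set w | b w] `&` [set _ | v = t]).
  apply/seteqP; split => w /=; case: (b w) => /=; [by left|by right| |].
    by case=> [[_ ->]|[]].
  by case=> [[]|[_ ->]].
by apply: measurableU; apply: measurableI;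
  [| exact: measurable_set_cst | exact: measurableC | exact: measurable_set_cst].
Qed.

Lemma measurable_Ywalk_eq pc pb y i p :
  measurable [set w | Ywalk N xi U pc pb w y i = p].
Proof.
elim: i p => [|i IH] p /=; first exact: measurable_set_cst.
have -> : [set w | (let z := Ywalk N xi U pc pb w y i in
      if stepRight N xi U pc pb w z then (z.1 + 1, z.2 + 1) else (z.1 - 1, z.2 + 1)) = p]
  = \bigcup_(z : int * int) ([set w | Ywalk N xi U pc pb w y i = z] `&`
      [set w | (if stepRight N xi U pc pb w z then (z.1 + 1, z.2 + 1)
                else (z.1 - 1, z.2 + 1)) = p]).
  apply/seteqP; split => w /=; first by exists (Ywalk N xi U pc pb w y i).
  by move=> [z _ /= [-> H]].
apply: countable_bigcupT_measurable; first exact: countableP.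
move=> z; apply: measurableI; first exact: IH.
exact/measurable_if_eq/measurable_stepRight.
Qed.

Lemma measurable_Abad pc pb vb v k : measurable (Abad N xi U pc pb vb v k).
Proof.
have -> : Abad N xi U pc pb vb v k = \bigcup_(x : nat) \bigcup_(p : int * int)
    ([set _ | (x <= Lscale k)%N /\ ((p.1 - x%:Z)%:~R < vel vb v k * (Lscale k)%:R)]
     `&` [set w | Ywalk N xi U pc pb w (x%:Z, 0%:Z) (Lscale k) = p]).
  apply/seteqP; split => w /=.
    move=> [x [H1 H2]]; exists x => //.
    by exists (Ywalk N xi U pc pb w (x%:Z, 0%:Z) (Lscale k)).
  by move=> [x _ [p _ /= [[H1 H2] H3]]]; exists x; rewrite H3.
do 2 (apply: countable_bigcupT_measurable; first exact: countableP; move=> ?).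
exact/measurableI/measurable_Ywalk_eq/measurable_set_cst.
Qed.

End Measurability.

Definition step_sign (b : bool) : int := if b then 1 else -1.

(* Junk value [false] beyond [L]. *)
Definition bit_at L (pi : {ffun 'I_L -> bool}) (j : nat) : bool :=
  if insub j is Some o then pi o else false.

Lemma bit_atE L (pi : {ffun 'I_L -> bool}) (o : 'I_L) : bit_at pi o = pi o.
Proof. by rewrite /bit_at valK. Qed.

Definition disp L (pi : {ffun 'I_L -> bool}) (i : nat) : int :=
  \sum_(j < i) step_sign (bit_at pi j).

Definition site L (pi : {ffun 'I_L -> bool}) (x : int) (i : nat) : int * int :=
  (x + disp pi i, Posz i).

Lemma dispS L (pi : {ffun 'I_L -> bool}) i :
  disp pi i.+1 = disp pi i + step_sign (bit_at pi i).
Proof. by rewrite /disp big_ord_recr. Qed.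

Lemma disp_bound L (pi : {ffun 'I_L -> bool}) i : - (i%:Z) <= disp pi i <= i%:Z.
Proof.
elim: i => [|i IH]; first by rewrite /disp big_ord0.
by rewrite dispS /step_sign; move: IH; case: bit_at => /andP[]; lia.
Qed.

Lemma disp_ord L (pi : {ffun 'I_L -> bool}) : disp pi L = \sum_(i < L) step_sign (pi i).
Proof. by apply: eq_bigr => i _; rewrite bit_atE. Qed.

Section Events.
Variable R : realType.
Context {d : measure_display} {Omega : measurableType d}.
Variables (N : int -> Omega -> nat) (xi : int -> nat -> int -> Omega -> int)
          (U : int * int -> Omega -> R).
Variables (pc pb : R).

Definition right_coin (z : int * int) := [set w : Omega | U z w <= pb].

Definition coins_match L (pi : {ffun 'I_L -> bool}) (x : int) :=
  \big[setI/setT]_(i < L)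
    (if pi i then right_coin (site pi x i) else ~` right_coin (site pi x i)).

Definition walk_bad L (vs : R) :=
  \big[setU/set0]_(x < L.+1)
    \big[setU/set0]_(pi : {ffun 'I_L -> bool} | (disp pi L)%:~R < vs * L%:R)
      coins_match pi (Posz x).

Definition few_paths M a := \bigcup_(n < M) [set w | N a w = n].

Definition idle_path L a j := \bigcap_(m < L) [set w | xi a j (Posz m) w = 0].

Definition no_idle_path L M a := \bigcap_(j < M) ~` idle_path L a j.

Definition box_bad L M := \bigcup_(i < (3 * L).+1)
  (few_paths M (i%:Z - L%:Z) `|` no_idle_path L M (i%:Z - L%:Z)).

Definition seen_coins L y w : {ffun 'I_L -> bool} :=
  [ffun i : 'I_L => U (Ywalk N xi U pc pb w y i) w <= pb].

Lemma inT_of_good_site L M a w : ~ (few_paths M a `|` no_idle_path L M a) w ->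
  forall n, (n <= L)%N -> inT N xi w (a, Posz n).
Proof.
move=> good n nL.
have MN : (M <= N a w)%N.
  by rewrite leqNgt; apply/negP => NM; apply: good; left; exists (N a w).
have [j jM idle] : exists2 j, (j < M)%N & idle_path L a j w.
  by apply: contrapT => nidle; apply: good; right => j jM idle; apply: nidle; exists j.
exists a, j; split; first exact: leq_trans jM MN.
by rewrite /= big1 ?addr0 // => i _; apply: idle; exact: leq_trans (ltn_ord i) nL.
Qed.

Lemma inT_of_good_box L M w : ~ box_bad L M w ->
  forall a n, - (L%:Z) <= a <= 2 * L%:Z -> (n <= L)%N -> inT N xi w (a, Posz n).
Proof.
move=> good a n /andP[La aL] nL; apply: (@inT_of_good_site L M) => // bad.
apply: good; exists (absz (a + L%:Z)); first by rewrite /=; lia.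
by have -> : (absz (a + L%:Z))%:Z - L%:Z = a by lia.
Qed.

Lemma Ywalk_seen_coins L M (x : nat) w : (x <= L)%N -> ~ box_bad L M w ->
  forall i, (i <= L)%N ->
  Ywalk N xi U pc pb w (x%:Z, 0) i = site (seen_coins L (x%:Z, 0) w) x%:Z i.
Proof.
move=> xL good; set pi := seen_coins L _ w.
elim=> [|i IH] iL; first by rewrite /site /disp big_ord0 addr0.
have iL' : (i < L)%N := iL.
rewrite /= IH; last exact: ltnW.
have inT_site : inT N xi w (site pi x%:Z i).
  apply: (inT_of_good_box good); last exact: ltnW.
  by have := disp_bound pi i; rewrite /=; lia.
have -> : stepRight N xi U pc pb w (site pi x%:Z i) = bit_at pi i.
  rewrite /stepRight (asboolT inT_site) /= orbF.
  by rewrite -(IH (ltnW iL)) -[i]/(nat_of_ord (Ordinal iL')) bit_atE ffunE.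
rewrite /site dispS /step_sign; case: bit_at => /=; congr pair; lia.
Qed.

Lemma Abad_sub k L M vs vb v : Lscale k = L -> vel vb v k <= vs ->
  Abad N xi U pc pb vb v k `<=` box_bad L M `|` walk_bad L vs.
Proof.
move=> <-{L} vel_vs w [x [xL Hw]].
have [bad|good] := pselect (box_bad (Lscale k) M w); [by left|right].
have Yseen := Ywalk_seen_coins xL good.
have xL' : (x < (Lscale k).+1)%N := xL.
rewrite /walk_bad -bigcup_seq; exists (Ordinal xL'); first by rewrite /= mem_index_enum.
rewrite -bigcup_seq_cond; exists (seen_coins (Lscale k) (x%:Z, 0) w).
  rewrite /= mem_index_enum /=; apply: lt_le_trans (ler_wpM2r (ler0n _ _) vel_vs).
  by rewrite Yseen // /= addrC addKr in Hw.
rewrite /coins_match -bigcap_seq => i _; have := Yseen i (ltnW (ltn_ord i)).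
by rewrite /= ffunE => <-; case: ifP => H; [exact: H | move=> /= hU; rewrite hU in H].
Qed.

End Events.

Section Chernoff.
Variable R : realType.

Definition coin_weight (pb : R) (b : bool) : R := if b then pb else 1 - pb.

Definition walk_mgf (pb s vs : R) : R :=
  expR (s * vs) * (pb * expR (- s) + (1 - pb) * expR s).

(* Exponential Markov: the indicator of [disp < vs L] is at most
   [expR (s (vs L - disp))], and the tilted sum over all patterns factorizes. *)
Lemma chernoff_walk (pb s vs : R) L : 0 <= pb <= 1 -> 0 <= s ->
  \sum_(pi : {ffun 'I_L -> bool} | (disp pi L)%:~R < vs * L%:R)
     \prod_(i < L) coin_weight pb (pi i)
  <= walk_mgf pb s vs ^+ L.
Proof.
move=> /andP[pb0 pb1] s0.
have w0 b : 0 <= coin_weight pb b by case: b; rewrite /coin_weight ?subr_ge0.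
pose tilt b := coin_weight pb b * expR (s * vs - s * (step_sign b)%:~R).
have tilt0 b : 0 <= tilt b by apply: mulr_ge0; [exact: w0 | exact: expR_ge0].
apply: (@le_trans _ _ (\sum_(pi : {ffun 'I_L -> bool}) \prod_(i < L) tilt (pi i))).
  rewrite [leRHS](bigID (fun pi : {ffun 'I_L -> bool} => (disp pi L)%:~R < vs * L%:R)) /=.
  rewrite -[leLHS]addr0 lerD //; last by apply: sumr_ge0 => pi _; exact: prodr_ge0.
  apply: ler_sum => pi low; rewrite big_split /= -expR_sum.
  apply: ler_peMr; first exact: prodr_ge0.
  rewrite -[leLHS]expR0 ler_expR sumrB -!mulr_sumr -rmorph_sum -disp_ord.
  rewrite sumr_const card_ord -mulr_natr -mulrBr.
  by rewrite mulr_ge0 // subr_ge0 ltW.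
rewrite -(bigA_distr_bigA (fun (i : 'I_L) b => tilt b)) prodr_const card_ord.
apply: lerXn2r; rewrite ?nnegrE ?sumr_ge0 //.
  rewrite mulr_ge0 ?expR_ge0 // addr_ge0 // mulr_ge0 ?expR_ge0 ?subr_ge0 //.
rewrite big_bool /tilt /coin_weight /step_sign /walk_mgf /= mulrDr !expRD.
rewrite (_ : (1%:~R : R) = 1) // (_ : ((-1)%:~R : R) = -1) // mulr1 mulrN1 opprK.
by rewrite le_eqVlt; apply/orP; left; apply/eqP; ring.
Qed.

Lemma expR_le_quadratic (t : R) : t <= 1 / 2 -> expR t <= 1 + t + 2 * t ^+ 2.
Proof.
move=> ht.
have h1 := expR_ge1Dx (- t).
have h2 : expR t * expR (- t) = 1 by rewrite -expRD subrr expR0.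
have e0 := expR_ge0 t.
have h3 : expR t * (1 - t) <= 1 by rewrite -[X in _ <= X]h2; apply: ler_wpM2l.
nra.
Qed.

Definition chernoff_exponent (dl : R) : R := dl / (4 * (2 + dl) ^+ 2).

Definition walk_rate (dl : R) : R := chernoff_exponent dl * dl / 2.

Lemma chernoff_exponent_gt0 (dl : R) : 0 < dl -> 0 < chernoff_exponent dl.
Proof. by move=> dl0; rewrite divr_gt0 // mulr_gt0 // exprn_gt0 //; lra. Qed.

Lemma walk_rate_gt0 (dl : R) : 0 < dl -> 0 < walk_rate dl.
Proof. by move=> dl0; rewrite divr_gt0 // mulr_gt0 // chernoff_exponent_gt0. Qed.

(* The exponent is small enough that [expR t <= 1 + t + 2 t^2] applies to both
   exponents [s (2 pb - 2 - dl)] and [s (2 pb - dl)]. *)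
Lemma walk_mgf_le (pb dl : R) : 0 <= pb <= 1 -> 0 < dl ->
  walk_mgf pb (chernoff_exponent dl) (2 * pb - 1 - dl) <= 1 - walk_rate dl.
Proof.
move=> /andP[pb0 pb1] dl0; rewrite /walk_rate; set s := chernoff_exponent dl.
have u0 : 0 < 4 * (2 + dl) ^+ 2 by rewrite mulr_gt0 // exprn_gt0 //; lra.
have hs : s * (4 * (2 + dl) ^+ 2) = dl by rewrite /s mulfVK // gt_eqF.
have s0 : 0 < s := chernoff_exponent_gt0 dl0.
have hsu : s * (2 + dl) <= 1 / 4.
  have : s * (2 + dl) * (4 * (2 + dl)) = dl by rewrite -[in RHS]hs; ring.
  nra.
have -> : walk_mgf pb s (2 * pb - 1 - dl)
    = pb * expR (s * (2 * pb - 2 - dl)) + (1 - pb) * expR (s * (2 * pb - dl)).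
  rewrite /walk_mgf mulrDr (mulrCA (expR _) pb) (mulrCA (expR _) (1 - pb)) -!expRD.
  by congr (_ * expR _ + _ * expR _); ring.
set t1 := s * (2 * pb - 2 - dl); set t2 := s * (2 * pb - dl).
have ht1 : t1 = s * (2 * pb - 2 - dl) by []; have ht2 : t2 = s * (2 * pb - dl) by [].
have e1 : expR t1 <= 1 + t1 + 2 * t1 ^+ 2 by apply: expR_le_quadratic; rewrite ht1; nra.
have e2 : expR t2 <= 1 + t2 + 2 * t2 ^+ 2 by apply: expR_le_quadratic; rewrite ht2; nra.
have q1 : t1 ^+ 2 <= s ^+ 2 * (2 + dl) ^+ 2.
  by rewrite ht1 exprMn; apply: ler_wpM2l; [exact: sqr_ge0 | nra].
have q2 : t2 ^+ 2 <= s ^+ 2 * (2 + dl) ^+ 2.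
  by rewrite ht2 exprMn; apply: ler_wpM2l; [exact: sqr_ge0 | nra].
have k2 : 2 * (s ^+ 2 * (2 + dl) ^+ 2) = s * dl / 2 by rewrite -[in RHS]hs; field.
nra.
Qed.

Lemma walk_mgf_expn_le (pb dl : R) L : 0 <= pb <= 1 -> 0 < dl ->
  walk_mgf pb (chernoff_exponent dl) (2 * pb - 1 - dl) ^+ L
  <= expR (- (walk_rate dl * L%:R)).
Proof.
move=> hpb dl0; have hmgf := walk_mgf_le hpb dl0.
have mgf0 : 0 <= walk_mgf pb (chernoff_exponent dl) (2 * pb - 1 - dl).
  case/andP: hpb => pb0 pb1.
  by rewrite mulr_ge0 ?expR_ge0 // addr_ge0 // mulr_ge0 ?expR_ge0 ?subr_ge0.
rewrite -mulNr [_ * L%:R]mulrC expRM_natl; apply: lerXn2r; rewrite ?nnegrE ?expR_ge0 //.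
by apply: le_trans hmgf _; exact: expR_ge1Dx.
Qed.

Lemma poisson_pmf_le (rho : R) (M n : nat) : 1 <= rho -> (n < M)%N ->
  expR (- rho) * rho ^+ n / (n`!)%:R <= (M.+1`!)%:R / rho.
Proof.
move=> rho1 nM; have rho0 : 0 < rho by lra.
have f0 : 0 < (M.+1`!)%:R :> R by rewrite ltr0n fact_gt0.
have fn1 : 1 <= (n`!)%:R :> R by rewrite ler1n fact_gt0.
have ep := expR_gt0 rho.
have taylor : rho ^+ M * rho <= expR rho * (M.+1`!)%:R.
  rewrite -exprSr -ler_pdivrMr //.
  by apply: le_trans (expR_ge1Dxn M (ltW rho0)); rewrite lerDr.
apply: (@le_trans _ _ (expR (- rho) * rho ^+ M)).
  have pos : 0 <= expR (- rho) * rho ^+ n by rewrite mulr_ge0 ?expR_ge0 ?exprn_ge0 ?ltW.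
  apply: (@le_trans _ _ (expR (- rho) * rho ^+ n)).
    by rewrite ler_pdivrMr ?(lt_le_trans ltr01) // ler_peMr.
  by rewrite ler_wpM2l ?expR_ge0 //; apply: ler_weXn2l => //; exact: ltnW.
by rewrite ler_pdivlMr // -mulrA expRN mulrC ler_pdivrMr // [leRHS]mulrC.
Qed.

End Chernoff.

Section EventMeasurability.
Variable R : realType.
Context {d : measure_display} {Omega : measurableType d}.
Variables (N : int -> Omega -> nat) (xi : int -> nat -> int -> Omega -> int)
          (U : int * int -> Omega -> R).
Hypothesis Hm : forall i E, gen_events N xi U i E -> measurable E.

Lemma measurable_few_paths M a : measurable (few_paths N M a).
Proof. by apply: bigcup_measurable => n _; exact: measurable_N_eq Hm _ _. Qed.

Lemma measurable_no_idle_path L M a : measurable (no_idle_path xi L M a).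
Proof.
apply: bigcap_measurableType => j _; apply/measurableC/bigcap_measurableType => m _.
exact: measurable_xi_eq Hm _ _ _ _.
Qed.

Lemma measurable_box_bad L M : measurable (box_bad N xi L M).
Proof.
apply: bigcup_measurable => i _.
by apply: measurableU; [exact: measurable_few_paths | exact: measurable_no_idle_path].
Qed.

Lemma measurable_coins_match pb L (pi : {ffun 'I_L -> bool}) x :
  measurable (coins_match U pb pi x).
Proof.
apply: bigsetI_measurable => i _; case: (pi i); first exact: measurable_U_le Hm _ _.
exact/measurableC/(measurable_U_le Hm).
Qed.

Lemma measurable_walk_bad pb L vs : measurable (walk_bad U pb L vs).
Proof.
do 2 apply: bigsetU_measurable => ? _.
exact: measurable_coins_match.
Qed.

End EventMeasurability.

Section Bounds.
Variable R : realType.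
Context {d : measure_display} {Omega : measurableType d}.
Variable P : probability Omega R.
Variables (N : int -> Omega -> nat) (xi : int -> nat -> int -> Omega -> int)
          (U : int * int -> Omega -> R).
Variables (q rho : R).
Hypothesis HM : PPP_model N xi U P q rho.

Let Hm : forall i E, gen_events N xi U i E -> measurable E.
Proof. by case: HM. Qed.

(* Only the [xi]- and [U]-components matter below; [t] is the threshold of the
   uniform events. *)
Definition base_event (t : R) (i : src) : set Omega :=
  match i with
  | inl (inl x) => [set w | N x w = 0%N]
  | inl (inr (x, j, m)) => [set w | xi x j m w = 0]
  | inr y => [set w | U y w <= t]
  end.

Lemma base_event_gen t i : gen_events N xi U i (base_event t i).
Proof. by case: i => [[x|[[x j] m]]|y] /=; eexists. Qed.

Definition idle_indices L a j : seq src :=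
  [seq inl (inr (a, j, Posz m)) | m <- index_iota 0 L].

Lemma idle_pathE t L a j :
  idle_path xi L a j = cyl (base_event t) (idle_indices L a j).
Proof.
rewrite /idle_path bigcap_mkord.
by rewrite -(big_mkord xpredT (fun m => [set w | xi a j (Posz m) w = 0])) /cyl big_map.
Qed.

Lemma pr_idle_path L a j : pr P (idle_path xi L a j) = q ^+ L.
Proof.
rewrite (idle_pathE 0) (pr_cyl HM (base_event_gen 0)); last first.
  by rewrite map_inj_uniq ?iota_uniq // => m1 m2 [].
rewrite big_map -[in RHS](subn0 L) -prodr_const_nat; apply: eq_bigr => m _.
by case: HM => _ _ /(_ a j (Posz m)) [_ H0 _] _ _; rewrite /pr /= H0.
Qed.

Lemma pr_no_idle_path L M a : pr P (no_idle_path xi L M a) = (1 - q ^+ L) ^+ M.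
Proof.
have -> : no_idle_path xi L M a = cyl (base_event 0) [::] `&`
    \big[setI/setT]_(b <- [seq (idle_indices L a j, false) | j <- index_iota 0 M])
      (if b.2 then cyl (base_event 0) b.1 else ~` cyl (base_event 0) b.1).
  rewrite /cyl big_nil setTI big_map /no_idle_path bigcap_mkord.
  rewrite -(big_mkord xpredT (fun j => ~` idle_path xi L a j)).
  by apply: eq_bigr => j _; rewrite (idle_pathE 0).
rewrite (pr_cyl_blocks HM (base_event_gen 0)); last first.
  rewrite /= -map_comp /=.
  have -> : flatten [seq idle_indices L a j | j <- index_iota 0 M] =
    [seq inl (inr (a, j, Posz m)) : src | j <- index_iota 0 M, m <- index_iota 0 L] by [].
  by apply: allpairs_uniq; rewrite ?iota_uniq // => -[j1 m1] [j2 m2] _ _ /= [-> ->].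
rewrite /cyl big_nil pr_setT mul1r big_map -[in RHS](subn0 M) -prodr_const_nat.
by apply: eq_bigr => j _ /=; rewrite -/(cyl _ _) -idle_pathE pr_idle_path.
Qed.

Lemma pr_few_paths M a :
  pr P (few_paths N M a) <= \sum_(n < M) expR (- rho) * rho ^+ n / (n`!)%:R.
Proof.
rewrite /few_paths bigcup_mkord.
apply: le_trans (pr_bigsetU_le P _ _) _.
  by move=> n _; exact: measurable_N_eq Hm _ _.
by apply: ler_sum => n _; case: HM => _ HN _ _ _; rewrite /pr HN.
Qed.

Lemma pr_box_bad_le L M : 1 <= rho -> pr P (box_bad N xi L M)
  <= ((3 * L).+1)%:R * (M%:R * ((M.+1`!)%:R / rho) + (1 - q ^+ L) ^+ M).
Proof.
move=> rho1; rewrite /box_bad bigcup_mkord.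
apply: le_trans (pr_bigsetU_le P _ _) _.
  move=> i _; apply: measurableU;
    [exact: measurable_few_paths Hm _ _ | exact: measurable_no_idle_path Hm _ _ _].
apply: (@le_trans _ _ (\sum_(i < (3 * L).+1)
    (M%:R * ((M.+1`!)%:R / rho) + (1 - q ^+ L) ^+ M))).
  2: by rewrite sumr_const card_ord -[_ *+ (3 * L).+1]mulr_natl.
apply: ler_sum => i _.
apply: le_trans (pr_setU_le P (measurable_few_paths Hm _ _)
  (measurable_no_idle_path Hm _ _ _)) _.
rewrite pr_no_idle_path lerD2r; apply: le_trans (pr_few_paths _ _) _.
apply: (@le_trans _ _ (\sum_(n < M) (M.+1`!)%:R / rho)).
  by apply: ler_sum => n _; exact: poisson_pmf_le.
by rewrite sumr_const card_ord -[_ *+ M]mulr_natl.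
Qed.

Section Coins.
Variable pb : R.
Hypothesis hpb : 0 <= pb <= 1.

Lemma pr_coins_match L (pi : {ffun 'I_L -> bool}) x :
  pr P (coins_match U pb pi x) = \prod_(i < L) coin_weight pb (pi i).
Proof.
have -> : coins_match U pb pi x = cyl (base_event pb) [::] `&`
    \big[setI/setT]_(b <- [seq ([:: inr (site pi x i)] : seq src, pi i)
                           | i : 'I_L <- index_enum 'I_L])
      (if b.2 then cyl (base_event pb) b.1 else ~` cyl (base_event pb) b.1).
  rewrite /cyl big_nil setTI big_map /coins_match; apply: eq_bigr => i _ /=.
  by rewrite big_cons big_nil setIT.
rewrite (pr_cyl_blocks HM (base_event_gen pb)); last first.
  rewrite /= -map_comp /= (_ : [seq [:: inr (site pi x i)] | i : 'I_L <- _] =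
    [seq [:: y] | y <- [seq inr (site pi x i) : src | i : 'I_L <- index_enum 'I_L]]);
    last by rewrite -map_comp.
  rewrite flatten_seq1 map_inj_uniq ?index_enum_uniq //.
  by move=> i1 i2 [] _ [] /ord_inj.
rewrite /cyl big_nil pr_setT mul1r big_map; apply: eq_bigr => i _ /=.
rewrite big_cons big_nil setIT /=.
have -> : pr P [set w | U (site pi x i) w <= pb] = pb.
  by case: HM => _ _ _ HU _; rewrite /pr HU.
by case: (pi i).
Qed.

Lemma pr_walk_bad_le L dl : 0 < dl ->
  pr P (walk_bad U pb L (2 * pb - 1 - dl))
  <= (L%:R + 1) * expR (- (walk_rate dl * L%:R)).
Proof.
move=> dl0; apply: le_trans (pr_bigsetU_le P _ _) _.
  move=> x _; apply: bigsetU_measurable => pi _.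
  exact: measurable_coins_match Hm _ _ _ _.
apply: (@le_trans _ _ (\sum_(x < L.+1) expR (- (walk_rate dl * L%:R)))).
  2: by rewrite sumr_const card_ord -[_ *+ L.+1]mulr_natl natr1.
apply: ler_sum => x _; apply: le_trans (pr_bigsetU_le P _ _) _.
  by move=> pi _; exact: measurable_coins_match Hm _ _ _ _.
under eq_bigr do rewrite pr_coins_match.
apply: le_trans (walk_mgf_expn_le L hpb dl0).
exact: chernoff_walk hpb (ltW (chernoff_exponent_gt0 dl0)).
Qed.

Lemma pr_Abad_le pc vb v k L M vs : Lscale k = L -> vel vb v k <= vs ->
  pr P (Abad N xi U pc pb vb v k) <= pr P (box_bad N xi L M) + pr P (walk_bad U pb L vs).
Proof.
move=> kL vel_vs.
have mbox := measurable_box_bad Hm L M; have mwalk := measurable_walk_bad Hm pb L vs.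
apply: le_trans (pr_setU_le P mbox mwalk).
apply: (le_pr P); [exact: measurable_Abad Hm _ _ _ _ _ | exact: measurableU |].
exact: (Abad_sub (pc := pc) M kL vel_vs).
Qed.

End Coins.

End Bounds.

Lemma Lscale_ge k : (k + 100 <= Lscale k)%N.
Proof.
elim: k => [|k IH] //=.
have h10 : (10 <= Nat.sqrt (Lscale k))%N.
  apply/ssrnat.leP; rewrite -[10%N]/(Nat.sqrt 100); apply: Nat.sqrt_le_mono.
  by apply/ssrnat.leP; exact: leq_trans (leq_addl _ _) IH.
have : (10 * Lscale k <= Nat.sqrt (Lscale k) * Lscale k)%N by rewrite leq_mul2r h10 orbT.
lia.
Qed.

Section Asymptotics.
Variable R : realType.

Lemma exists_nat_gt (x : R) : exists n : nat, x < n%:R.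
Proof.
have [x0|x0] := lerP x 0; first by exists 1%N; rewrite (le_lt_trans x0) ?ltr01.
by exists (Num.bound x); apply: archi_boundP; exact: ltW.
Qed.

Lemma exists_Lscale_gt (x : R) k0 : exists k, (k0 <= k)%N /\ x < (Lscale k)%:R.
Proof.
have [n xn] := exists_nat_gt x; exists (maxn k0 n); split; first exact: leq_maxl.
apply: lt_le_trans xn _; rewrite ler_nat.
by apply: leq_trans (Lscale_ge _); rewrite (leq_trans (leq_maxr k0 n)) ?leq_addr.
Qed.

Lemma rho_seq_ge (rho0 : R) k : 1 <= rho0 -> rho0 <= rho_seq rho0 k.
Proof.
move=> rho01; elim: k => [|k IH] //=.
rewrite -[leLHS]mul1r; apply: ler_pM => //; first lra.
by rewrite lerDl powR_ge0.
Qed.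

Lemma vel_le (vb v : R) k : 0 < delta vb v -> (0 < k)%N -> vel vb v k <= vb - delta vb v.
Proof.
move=> d0; elim: k => [|[|k] IH] // _.
apply: le_trans (IH isT); rewrite [leLHS]/= lerBlDr lerDl.
apply: divr_ge0 (sqr_ge0 _) ; apply: mulr_ge0 (ltW d0) _.
exact: divr_ge0 (ler0n _ _) (sqr_ge0 _).
Qed.

(* The threshold gives [216 <= eta ln x], so that [eta x >= eta (ln x)^4 / 24]
   dominates [ln x + (ln x)^2 + 7]. *)
Lemma decay_le_stretched_exp (eta x : R) : 0 < eta -> expR (1 + 216 / eta) < x ->
  (x + 1) * expR (- (eta * x)) <= expR (- powR (ln x) (3 / 2)) / 4.
Proof.
move=> eta0 x_big; set m0 := 1 + 216 / eta.
have x0 : 0 < x by apply: lt_trans x_big; exact: expR_gt0.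
set m := ln x.
have xm : expR m = x by rewrite /m lnK // posrE.
have mm0 : m0 <= m.
  by rewrite /m -[leLHS](expRK m0) ler_ln ?posrE ?expR_gt0 // ltW.
have h216 : eta * (216 / eta) = 216 by rewrite mulrC divfK // gt_eqF.
have d0 : 0 < 216 / eta by apply: divr_gt0.
have m1 : 1 <= m by rewrite /m0 in mm0; lra.
have em : 216 <= eta * m.
  have : eta * m0 <= eta * m by rewrite ler_pM2l.
  by rewrite /m0 mulrDr mulr1 h216; lra.
have m00 : 0 <= m by lra.
have pw : powR m (3 / 2) <= m ^+ 2 by rewrite -powR_mulrn //; apply: ler_powR => //; lra.
have x4 : m ^+ 4 / 24 <= x.
  by have := expR_ge1Dxn 3 m00; rewrite xm (_ : (3.+1`!)%N = 24%N) //; lra.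
have hx : eta * (m ^+ 4 / 24) <= eta * x by rewrite ler_pM2l.
have m2 : m <= m ^+ 2 by nra.
have m3 : m ^+ 2 <= m ^+ 3 by rewrite exprS; nra.
have e4 : 216 * m ^+ 3 <= eta * m ^+ 4.
  by rewrite (exprS m 3) mulrA; apply: ler_wpM2r; [exact: exprn_ge0; lra | exact: em].
have key : 7 <= eta * x - m - m ^+ 2 by nra.
have split_exp :
    expR (- (eta * x)) * x = expR (- m ^+ 2) * expR (- (eta * x - m - m ^+ 2)).
  by rewrite -xm -!expRD; congr expR; ring.
have h8 : expR (- (eta * x - m - m ^+ 2)) <= 8^-1.
  rewrite expRN lef_pV2 ?posrE ?expR_gt0 //.
  by apply: le_trans (expR_ge1Dx _); lra.
have eT : expR (- m ^+ 2) <= expR (- powR m (3 / 2)) by rewrite ler_expR; lra.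
have eP := expR_gt0 (- m ^+ 2).
have eQ := expR_gt0 (- (eta * x)).
have x1 : 1 <= x by have := expR_ge1Dx m0; rewrite /m0 in x_big *; lra.
apply: (@le_trans _ _ (2 * (expR (- (eta * x)) * x))); first nra.
rewrite split_exp; apply: (@le_trans _ _ (2 * (expR (- m ^+ 2) * 8^-1))).
  by rewrite ler_wpM2l // ler_wpM2l // ltW.
lra.
Qed.

Lemma exists_expn_small (a c eps : R) : 0 < a <= 1 -> 0 <= c -> 0 < eps ->
  exists M : nat, c * (1 - a) ^+ M <= eps.
Proof.
move=> /andP[a0 a1] c0 eps0.
have [M cM] := exists_nat_gt (c / (eps * a)).
exists M.
have aM0 : 0 <= a * M%:R by rewrite mulr_ge0 // ltW.
have c_le : c <= eps * (a * M%:R).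
  by rewrite mulrA (mulrC _ M%:R) -ler_pdivrMr ?mulr_gt0 // ltW.
have geom : (1 - a) ^+ M <= (1 + a * M%:R)^-1.
  apply: le_trans (_ : expR (- (a * M%:R)) <= _).
    rewrite -mulNr mulrC expRM_natl; apply: lerXn2r; rewrite ?nnegrE ?expR_ge0 //.
      by rewrite subr_ge0.
    exact: expR_ge1Dx.
  by rewrite expRN lef_pV2 ?posrE ?expR_gt0 ?ltr_pwDl // expR_ge1Dx.
apply: le_trans (ler_wpM2l c0 geom) _.
by rewrite -[leLHS]/(c / _) ler_pdivrMr ?ltr_pwDl //; nra.
Qed.

Lemma exists_density (q T : R) L : 0 < T -> 0 < q < 1 ->
  exists (M : nat) (rho0 : R), 1 <= rho0 /\ forall rho, rho0 <= rho ->
    ((3 * L).+1)%:R * (M%:R * ((M.+1`!)%:R / rho) + (1 - q ^+ L) ^+ M) <= T / 4.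
Proof.
move=> T0 /andP[q0 q1]; set B : R := ((3 * L).+1)%:R.
have B0 : 0 < B by rewrite ltr0n.
have qL : 0 < q ^+ L <= 1 by rewrite exprn_gt0 // exprn_ile1 // ltW.
have [M idle_small] := exists_expn_small qL (ltW B0) (divr_gt0 T0 (ltr0n _ 8)).
set F : R := (M.+1`!)%:R; have F0 : 0 < F by rewrite ltr0n fact_gt0.
set X := 8 * B * (M%:R * F) / T.
have X0 : 0 <= X by rewrite /X divr_ge0 ?(ltW T0) // !mulr_ge0 // ltW.
exists M, (1 + X); split=> [|rho rho_ge]; first lra.
have rho0 : 0 < rho by lra.
have few_small : B * (M%:R * (F / rho)) <= T / 8.
  have : X * T <= rho * T by rewrite ler_pM2r //; lra.
  rewrite /X divfK ?gt_eqF // => MF_le.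
  have -> : B * (M%:R * (F / rho)) = 8 * B * (M%:R * F) / (8 * rho).
    by field; rewrite gt_eqF.
  by rewrite ler_pdivrMr ?mulr_gt0 //; lra.
rewrite mulrDr; lra.
Qed.

End Asymptotics.

Theorem lemma3p4 (R : realType) (q pc pb v : R) :
  0 < q < 1 -> 0 <= pc <= 1 -> 0 <= pb <= 1 ->
  (2 * pc - 1 < 2 * pb - 1) -> v < 2 * pb - 1 ->
  forall k' : nat, exists (k2 : nat) (rho0 : R),
    [/\ (k' <= k2)%N, (0 < k2)%N, 1 <= rho0 &
      forall (d : measure_display) (Omega : measurableType d)
             (P : probability Omega R)
             (N : int -> Omega -> nat) (xi : int -> nat -> int -> Omega -> int)
             (U : int * int -> Omega -> R),
        PPP_model N xi U P q (rho_seq rho0 k2) ->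
        (P (Abad N xi U pc pb (2 * pb - 1) v k2) <
           (expR (- powR (ln (Lscale k2)%:R) (3 / 2)))%:E)%E].
Proof.
move=> hq _ hpb _ hv k'.
pose dl := delta (2 * pb - 1) v; have dl0 : 0 < dl by rewrite /dl /delta; lra.
have [k2 [k2_ge L_big]] :=
  exists_Lscale_gt (expR (1 + 216 / walk_rate dl)) (maxn k' 1).
pose L := Lscale k2; pose T : R := expR (- powR (ln L%:R) (3 / 2)).
have T0 : 0 < T by exact: expR_gt0.
have [M [rho0 [rho0_ge1 box_small]]] := exists_density L T0 hq.
have k2_gt0 : (0 < k2)%N by apply: leq_trans k2_ge; rewrite leq_maxr.
exists k2, rho0; split=> // [|d Omega P N xi U HM].
  by apply: leq_trans k2_ge; rewrite leq_maxl.
have rho_ge := rho_seq_ge k2 rho0_ge1.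
have Hm : forall i E, gen_events N xi U i E -> measurable E by case: HM.
rewrite (prE P (measurable_Abad Hm _ _ _ _ _)) lte_fin.
have := pr_Abad_le HM pb pc M (erefl L) (vel_le dl0 k2_gt0).
have := pr_box_bad_le HM L M (le_trans rho0_ge1 rho_ge).
have := pr_walk_bad_le HM hpb L dl0.
have := decay_le_stretched_exp (walk_rate_gt0 dl0) L_big.
have := box_small _ rho_ge.
rewrite -/L -/T; lra.
Qed.
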